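(* Let $(A_i,\omega_i)$, $i=1,2$, be commutative baric algebras over $K$ and let $I$ be a two-sided ideal of $A_1\bowtie A_2$ with $I\subseteq\operatorname{Ker}(\omega_1\bowtie\omega_2)$. Then $I_1=A_1$ if and only if $I=\operatorname{Ker}(\omega_1\bowtie\omega_2)$.
   Context: A baric algebra over a field $K$ is a pair $(A,\omega)$ where $A$ is a (not necessarily associative) $K$-algebra and $\omega:A\to K$ is a nonzero $K$-algebra homomorphism. For baric algebras $(A_1,\omega_1),(A_2,\omega_2)$, $A_1\bowtie A_2$ denotes the vector space $A_1\oplus A_2$ with product $(a_1,a_2)(b_1,b_2)=(a_1b_1+\omega_2(b_2)a_1,\ a_2b_2+\omega_1(b_1)a_2)$, and $\omega_1\bowtie\omega_2(a_1,a_2)=\omega_1(a_1)+\omega_2(a_2)$. For $I\subseteq A_1\bowtie A_2$, $I_1=\{a_1\in A_1:\exists a_2\in A_2,\ (a_1,a_2)\in I\}$. *)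

(* Non-associative algebras are modelled as a K-vector
   space (lmodType K) together with a bilinear product. *)
From HB Require Import structures.
From mathcomp Require Import all_boot all_order all_algebra.
Set Implicit Arguments. Unset Strict Implicit. Unset Printing Implicit Defensive.
Import GRing.Theory.
Local Open Scope ring_scope.

Section Defs.
Variable K : fieldType.

Definition bilinear_mul (V : lmodType K) (m : V -> V -> V) : Prop :=
  (forall (a : K) (x y z : V), m (a *: x + y) z = a *: m x z + m y z) /\
  (forall (a : K) (x y z : V), m z (a *: x + y) = a *: m z x + m z y).

Definition comm_mul (V : lmodType K) (m : V -> V -> V) : Prop :=
  forall x y : V, m x y = m y x.

Definition weight_fun (V : lmodType K) (m : V -> V -> V) (w : V -> K) : Prop :=
  [/\ forall (a : K) (x y : V), w (a *: x + y) = a * w x + w y,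
      forall x y : V, w (m x y) = w x * w y
    & exists x : V, w x != 0].

Definition baric (V : lmodType K) (m : V -> V -> V) (w : V -> K) : Prop :=
  bilinear_mul m /\ weight_fun m w.

Definition bowtie_mul (V1 V2 : lmodType K) (m1 : V1 -> V1 -> V1)
  (m2 : V2 -> V2 -> V2) (w1 : V1 -> K) (w2 : V2 -> K)
  (x y : V1 * V2) : V1 * V2 :=
  (m1 x.1 y.1 + w2 y.2 *: x.1, m2 x.2 y.2 + w1 y.1 *: x.2).

Definition bowtie_w (V1 V2 : lmodType K) (w1 : V1 -> K) (w2 : V2 -> K)
  (x : V1 * V2) : K := w1 x.1 + w2 x.2.

Definition bowtie_ideal (V1 V2 : lmodType K) (m1 : V1 -> V1 -> V1)
  (m2 : V2 -> V2 -> V2) (w1 : V1 -> K) (w2 : V2 -> K)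
  (I : V1 * V2 -> Prop) : Prop :=
  [/\ I (0, 0),
      forall (a : K) (x y : V1 * V2), I x -> I y ->
        I (a *: x.1 + y.1, a *: x.2 + y.2)
    & forall x y : V1 * V2, I x ->
        I (bowtie_mul m1 m2 w1 w2 x y) /\ I (bowtie_mul m1 m2 w1 w2 y x)].

Definition proj1_set (V1 V2 : Type) (I : V1 * V2 -> Prop) : V1 -> Prop :=
  fun a1 => exists a2, I (a1, a2).

End Defs.

From mathcomp Require Import all_boot all_order all_algebra.
Set Implicit Arguments. Unset Strict Implicit. Unset Printing Implicit Defensive.
Import GRing.Theory.
Local Open Scope ring_scope.

(* Proof of Proposition 5.3.
   Write ker for Ker(w1 ⋈ w2) = { (x1, x2) | w1 x1 + w2 x2 = 0 }.
   (<=) If I = ker then every a1 lies in I_1, witnessed by (a1, -w1(a1) e2)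
        where e2 is an element of weight 1 in A2.
   (=>) Given (a1, a2) in I and any c2 in A2, the two products of (a1, a2)
        with (0, c2) lie in I; by commutativity of A2 their difference is
        (w2(c2) a1, -w1(a1) c2).  Choosing (a1, c2) = (x1, e2) and then
        (a1, c2) = (e1, -(x2 + w1(x1) e2)) produces two elements of I whose
        sum is any prescribed (x1, x2) in ker, so ker ⊆ I. *)

Section LinearMaps.
Variables (K : fieldType) (V U : lmodType K) (f : V -> U).
Hypothesis f_lin : forall (a : K) (x y : V), f (a *: x + y) = a *: f x + f y.

Lemma lin_map0 : f 0 = 0.
Proof.
have := f_lin 1 0 0; rewrite scaler0 addr0 scale1r => h.
by apply/esym/(addrI (f 0)); rewrite addr0.
Qed.

Lemma lin_mapZ (a : K) (x : V) : f (a *: x) = a *: f x.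
Proof. by have := f_lin a x 0; rewrite !addr0 lin_map0 addr0. Qed.

Lemma lin_mapD (x y : V) : f (x + y) = f x + f y.
Proof. by have := f_lin 1 x y; rewrite !scale1r. Qed.

Lemma lin_mapN (x : V) : f (- x) = - f x.
Proof. by rewrite -scaleN1r lin_mapZ scaleN1r. Qed.

End LinearMaps.

Section Weights.
Variables (K : fieldType) (V : lmodType K) (m : V -> V -> V) (w : V -> K).
Hypothesis hw : weight_fun m w.

Lemma weight_lin (a : K) (x y : V) :
  w (a *: x + y) = a *: (w x : K^o) + w y.
Proof. by case: hw. Qed.

Lemma weight0 : w 0 = 0.
Proof. exact: (@lin_map0 _ _ K^o w weight_lin). Qed.

Lemma weightZ (a : K) (x : V) : w (a *: x) = a * w x.
Proof. exact: (@lin_mapZ _ _ K^o w weight_lin). Qed.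

Lemma weightD (x y : V) : w (x + y) = w x + w y.
Proof. exact: (@lin_mapD _ _ K^o w weight_lin). Qed.

Lemma weightN (x : V) : w (- x) = - w x.
Proof. exact: (@lin_mapN _ _ K^o w weight_lin). Qed.

(* A nonzero weight takes the value 1: rescale an element of nonzero weight. *)
Lemma weight_unit : exists e : V, w e = 1.
Proof.
case: hw => _ _ [x wx_neq0]; exists ((w x)^-1 *: x).
by rewrite weightZ mulVf.
Qed.

End Weights.

Section BilinearProducts.
Variables (K : fieldType) (V : lmodType K) (m : V -> V -> V).
Hypothesis hm : bilinear_mul m.

Lemma mul0v (z : V) : m 0 z = 0.
Proof. by apply: (@lin_map0 _ _ _ (m ^~ z)) => a x y; case: hm. Qed.

Lemma mulv0 (z : V) : m z 0 = 0.
Proof. by apply: (@lin_map0 _ _ _ (m z)) => a x y; case: hm. Qed.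

End BilinearProducts.

Section BowtieIdeals.
Variables (K : fieldType) (A1 A2 : lmodType K).
Variables (m1 : A1 -> A1 -> A1) (w1 : A1 -> K).
Variables (m2 : A2 -> A2 -> A2) (w2 : A2 -> K).
Variable I : A1 * A2 -> Prop.
Hypothesis hI : bowtie_ideal m1 m2 w1 w2 I.

Lemma ideal_add (x y : A1 * A2) : I x -> I y -> I (x.1 + y.1, x.2 + y.2).
Proof.
case: hI => _ Ilin _ Ix Iy.
by have := Ilin 1 x y Ix Iy; rewrite !scale1r.
Qed.

Lemma ideal_sub (x y : A1 * A2) : I x -> I y -> I (x.1 - y.1, x.2 - y.2).
Proof.
case: hI => _ Ilin _ Ix Iy.
by have := Ilin (-1) y x Iy Ix; rewrite !scaleN1r ![- _ + _]addrC.
Qed.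

Hypothesis hb1 : bilinear_mul m1.
Hypotheses (hw1 : weight_fun m1 w1) (hw2 : weight_fun m2 w2).
Hypothesis hc2 : comm_mul m2.

(* The key computation: multiplying (a1, a2) in I by (0, c2) on the right
   and on the left and subtracting, the A2-products cancel by commutativity,
   leaving (w2(c2) a1, -w1(a1) c2) in I. *)
Lemma ideal_cross (a1 : A1) (a2 c2 : A2) :
  I (a1, a2) -> I (w2 c2 *: a1, - (w1 a1 *: c2)).
Proof.
case: (hI) => _ _ Imul /(Imul _ (0, c2)) [Iright Ileft].
have := ideal_sub Iright Ileft.
rewrite /bowtie_mul /= (mul0v hb1) (mulv0 hb1) (weight0 hw1) scale0r.
by rewrite scaler0 !add0r !addr0 subr0 hc2 opprD addNKr.
Qed.

Lemma ker_sub_ideal :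
  (forall a1 : A1, proj1_set I a1) ->
  forall x : A1 * A2, bowtie_w w1 w2 x = 0 -> I x.
Proof.
move=> Iproj [x1 x2]; rewrite /bowtie_w /= => wx0.
have [e1 we1] := weight_unit hw1; have [e2 we2] := weight_unit hw2.
have cross a1 c2 : I (w2 c2 *: a1, - (w1 a1 *: c2)).
  by have [a2 Ia] := Iproj a1; exact: ideal_cross Ia.
set y2 := - (x2 + w1 x1 *: e2).
have wy2 : w2 y2 = 0.
  by rewrite (weightN hw2) (weightD hw2) (weightZ hw2) we2 mulr1 addrC wx0 oppr0.
have := ideal_add (cross x1 e2) (cross e1 y2).
by rewrite /= we2 we1 wy2 !scale1r scale0r addr0 opprK addrC addrK.
Qed.

End BowtieIdeals.

Theorem proposition5p3 (K : fieldType) (A1 A2 : lmodType K)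
  (m1 : A1 -> A1 -> A1) (w1 : A1 -> K) (m2 : A2 -> A2 -> A2) (w2 : A2 -> K)
  (hA1 : baric m1 w1) (hA2 : baric m2 w2)
  (hc1 : comm_mul m1) (hc2 : comm_mul m2)
  (I : A1 * A2 -> Prop) (hI : bowtie_ideal m1 m2 w1 w2 I)
  (hIker : forall x, I x -> bowtie_w w1 w2 x = 0) :
  (forall a1 : A1, proj1_set I a1) <->
  (forall x : A1 * A2, I x <-> bowtie_w w1 w2 x = 0).
Proof.
split=> [Iproj x | Iker a1].
- by split; [exact: hIker | exact: (ker_sub_ideal hI hA1.1 hA1.2 hA2.2 hc2)].
- have [e2 we2] := weight_unit hA2.2.
  exists (- w1 a1 *: e2); apply/Iker.
  by rewrite /bowtie_w /= (weightZ hA2.2) we2 mulr1 subrr.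
Qed.
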